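(* Let $\mathsf{M}=(E,\mathcal{L})$ be a loopless matroid, let $F_1,\dots,F_k\in\mathcal{L}^*$ be distinct proper flats and let $d_1,\dots,d_k$ be positive integers. Then in $A^*(\mathsf{M})$: if, after possibly relabeling, $F_1,\dots,F_k$ form a flag $\mathcal{F}=(\emptyset\subsetneq F_1\subsetneq\dots\subsetneq F_k\subsetneq E)$, then \[ D_{F_1}^{d_1}\cdots D_{F_k}^{d_k}=D_\mathcal{F}\prod_{i=1}^k(-\psi_{F_i}^--\psi_{F_i}^+)^{d_i-1}, \] where $D_\mathcal{F}=D_{F_1}\cdots D_{F_k}$; and if $F_i$ and $F_j$ are incomparable for some $i,j$, then $D_{F_1}^{d_1}\cdots D_{F_k}^{d_k}=0$.
   Context: A matroid $\mathsf{M}=(E,\mathcal{L})$ consists of a finite ground set $E$ and a collection $\mathcal{L}\subseteq 2^E$ of flats such that (1) the intersection of two flats is a flat, and (2) for every flat $F$, every element of $E\setminus F$ lies in exactly one flat that is minimal among flats strictly containing $F$. It is loopless if $\emptyset\in\mathcal{L}$. Write $\mathcal{L}^*=\mathcal{L}\setminus\{\emptyset,E\}$. The Chow ring is $A^*(\mathsf{M})=\mathbb{Z}[X_F\mid F\in\mathcal{L}^*]/(\mathcal{I}+\mathcal{J})$, where $\mathcal{I}$ is generated by $X_{F_1}X_{F_2}$ for incomparable $F_1,F_2$, and $\mathcal{J}$ is generated by $\sum_{F\in\mathcal{L}^*,\,e\in F}X_F-\sum_{F\in\mathcal{L}^*,\,f\in F}X_F$ for $e,f\in E$; $D_F$ is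 the class of $X_F$. For any flat $F\in\mathcal{L}$ and any $e\in E$, \[ \psi_F^-=\sum_{G\in\mathcal{L}^*,\ e\in G}D_G-\sum_{G\in\mathcal{L}^*,\ G\supseteq F}D_G,\qquad \psi_F^+=\sum_{G\in\mathcal{L}^*,\ e\notin G}D_G-\sum_{G\in\mathcal{L}^*,\ G\subseteq F}D_G, \] which are independent of the choice of $e$. *)

From mathcomp Require Import all_boot all_order all_algebra all_fingroup.
Set Implicit Arguments. Unset Strict Implicit. Unset Printing Implicit Defensive.
Import GRing.Theory.
Local Open Scope ring_scope.

Section Matroid.
Variable T : finType. (* the ground set E is the whole of T *)

Definition is_cover (L : {set {set T}}) (F G : {set T}) : Prop :=
  [/\ G \in L, F \proper G &
      forall H, H \in L -> F \proper H -> H \subset G -> H = G].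

Definition is_matroid (L : {set {set T}}) : Prop :=
  (forall F1 F2, F1 \in L -> F2 \in L -> F1 :&: F2 \in L) /\
  (forall F e, F \in L -> e \notin F ->
     exists! G, is_cover L F G /\ e \in G).

Definition loopless (L : {set {set T}}) : Prop := set0 \in L.

Definition Lstar (L : {set {set T}}) : {set {set T}} :=
  L :\: [set set0; setT].

Definition incomparable (A B : {set T}) : bool :=
  ~~ (A \subset B) && ~~ (B \subset A).

(* D : {set T} -> R satisfies the defining relations of the Chow ring A^*(M)
   (generators X_F, F in L^*, relations I and J). *)
Definition chow_relations (R : comPzRingType) (L : {set {set T}})
    (D : {set T} -> R) : Prop :=
  (forall F1 F2, F1 \in Lstar L -> F2 \in Lstar L -> incomparable F1 F2 ->
     D F1 * D F2 = 0) /\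
  (forall e f : T,
     \sum_(G in Lstar L | e \in G) D G = \sum_(G in Lstar L | f \in G) D G).

Definition psi_minus (R : comPzRingType) (L : {set {set T}}) (D : {set T} -> R)
    (e : T) (F : {set T}) : R :=
  \sum_(G in Lstar L | e \in G) D G - \sum_(G in Lstar L | F \subset G) D G.

Definition psi_plus (R : comPzRingType) (L : {set {set T}}) (D : {set T} -> R)
    (e : T) (F : {set T}) : R :=
  \sum_(G in Lstar L | e \notin G) D G - \sum_(G in Lstar L | G \subset F) D G.

End Matroid.

From mathcomp Require Import all_boot all_order all_algebra all_fingroup.
Set Implicit Arguments.
Unset Strict Implicit.
Unset Printing Implicit Defensive.
Import GRing.Theory.
Local Open Scope ring_scope.

(* In -psi^-_F - psi^+_F the two sums depending on e add up to the sum of all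
   D_G, while the sums over G containing F and over G contained in F cover every
   flat comparable to F, and F itself twice.  So
   -psi^-_F - psi^+_F = D_F - (sum of D_G over G incomparable to F), and the
   relations I give D_F * (-psi^-_F - psi^+_F) = D_F^2, whence
   D_F^d = D_F * (-psi^-_F - psi^+_F)^(d-1) for d > 0.  A product containing
   two incomparable D_F's vanishes by I. *)

Section ChowRing.
Variables (T : finType) (L : {set {set T}}) (R : comPzRingType).
Variables (D : {set T} -> R) (e : T).

Local Notation neg_psi F := (- psi_minus L D e F - psi_plus L D e F).

Lemma neg_psi_sum (F : {set T}) : F \in Lstar L ->
  neg_psi F = D F - \sum_(G in Lstar L | incomparable F G) D G.
Proof.
move=> LF; have -> : D F = \sum_(G in Lstar L | G == F) D G.
  by rewrite (big_pred1 F) // => G; rewrite andb_idl // => /eqP->.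
rewrite /psi_minus /psi_plus !big_mkcondr -!sumrB -sumrN -sumrB.
apply: eq_bigr => G _; rewrite /incomparable eqEsubset.
by case: (e \in G) (F \subset G) (G \subset F) => [] [] [] /=;
  rewrite ?(subrr, subr0, sub0r, oppr0, opprK, addr0, add0r).
Qed.

Hypothesis mul_incomparable : forall F1 F2, F1 \in Lstar L -> F2 \in Lstar L ->
  incomparable F1 F2 -> D F1 * D F2 = 0.

Lemma mul_neg_psi (F : {set T}) : F \in Lstar L -> D F * neg_psi F = D F ^+ 2.
Proof.
move=> LF; rewrite neg_psi_sum // mulrBr mulr_sumr big1 ?subr0 //.
by move=> G /andP[LG FG]; apply: mul_incomparable.
Qed.

Lemma expD_neg_psi (F : {set T}) n : F \in Lstar L ->
  D F ^+ n.+1 = D F * neg_psi F ^+ n.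
Proof.
move=> LF; elim: n => [|n IHn]; first by rewrite expr1 expr0 mulr1.
by rewrite exprS IHn mulrA -expr2 -mul_neg_psi // -mulrA -exprS.
Qed.

Lemma prod_expD_neg_psi k (F : 'I_k -> {set T}) (d : 'I_k -> nat) :
  (forall i, F i \in Lstar L) -> (forall i, (0 < d i)%N) ->
  \prod_(i < k) D (F i) ^+ d i =
    (\prod_(i < k) D (F i)) * \prod_(i < k) neg_psi (F i) ^+ (d i).-1.
Proof.
move=> LF d_gt0; rewrite -big_split; apply: eq_bigr => i _ /=.
by rewrite -expD_neg_psi // prednK.
Qed.

Lemma prod_expD_incomparable k (F : 'I_k -> {set T}) (d : 'I_k -> nat) i j :
  (forall i, F i \in Lstar L) -> (forall i, (0 < d i)%N) ->
  incomparable (F i) (F j) -> \prod_(i < k) D (F i) ^+ d i = 0.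
Proof.
move=> LF d_gt0 Fij; have ij : i != j.
  by apply: contraTneq Fij => ->; rewrite /incomparable subxx.
rewrite (bigD1 i) // (bigD1 j) 1?eq_sym //= mulrA.
rewrite -(prednK (d_gt0 i)) -(prednK (d_gt0 j)) !exprS mulrACA.
by rewrite mul_incomparable ?LF // !mul0r.
Qed.

End ChowRing.

Theorem corollary3p4 (T : finType) (L : {set {set T}})
  (HM : is_matroid L) (Hll : loopless L)
  (k : nat) (F : 'I_k -> {set T}) (d : 'I_k -> nat)
  (HFinj : injective F) (HFL : forall i, F i \in Lstar L)
  (Hd : forall i, (0 < d i)%N) :
  forall (R : comPzRingType) (D : {set T} -> R), chow_relations L D ->
  forall e : T,
  ((exists s : 'S_k, forall i j : 'I_k, (i < j)%N -> F (s i) \proper F (s j)) ->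
     \prod_(i < k) D (F i) ^+ d i =
       (\prod_(i < k) D (F i)) *
       \prod_(i < k) (- psi_minus L D e (F i) - psi_plus L D e (F i)) ^+ (d i).-1)
  /\
  ((exists i j : 'I_k, incomparable (F i) (F j)) ->
     \prod_(i < k) D (F i) ^+ d i = 0).
Proof.
move=> R D [mul_incomparable _] e.
split=> [_ | [i [j Fij]]].
  exact: (prod_expD_neg_psi e mul_incomparable HFL Hd).
exact: (prod_expD_incomparable mul_incomparable HFL Hd Fij).
Qed.
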